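(* With the notation below, after separating the $\nu$ null directions of $\mathcal L$, $$\sum_{a\in G_K^m}\exp\bigl(2\pi i\,Q_{\mathcal L,K}(a)\bigr)=|G_K|^{\nu}\sum_{[y]\in G_K^{\rho}}\exp\!\bigl(\pi i\,y^\top(\mathcal L_{\mathrm{reg}}\otimes K^{-1})y\bigr).$$
   Context: $K\in M_n(\mathbb Z)$ is symmetric, nondegenerate and even; $G_K=\mathbb Z^n/K\mathbb Z^n$. $\mathcal L\in M_m(\mathbb Z)$ is a symmetric integer matrix (the linking matrix of a framed link) with rank $\rho$ and nullity $\nu=m-\rho$; $U\in GL_m(\mathbb Z)$ with $U^\top\mathcal LU=\mathrm{diag}(\mathcal L_{\mathrm{reg}},0)$, $\mathcal L_{\mathrm{reg}}\in M_\rho(\mathbb Z)$ nondegenerate. For $a\in G_K^m$ with integer lifts $x=(x_1,\dots,x_m)$, $Q_{\mathcal L,K}(a)\equiv\frac12x^\top(\mathcal L\otimes K^{-1})x\pmod1$; the summand on the right is evaluated at integer lifts of $y$. *)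

From HB Require Import structures.
From mathcomp Require Import all_boot all_order all_algebra.
From mathcomp Require Import reals trigo.
From mathcomp Require Import complex.
Set Implicit Arguments. Unset Strict Implicit. Unset Printing Implicit Defensive.
Import Order.TTheory GRing.Theory Num.Theory.
Local Open Scope ring_scope.

Definition expi (R : realType) (t : R) : R[i] := (cos t +i* sin t)%C.

Definition inKlat (n : nat) (K : 'M[int]_n) (v : 'cV[int]_n) : Prop :=
  exists w : 'cV[int]_n, v = K *m w.

(* R is a complete system of representatives of G_K = Z^n / K Z^n:
   every integer vector is congruent mod K Z^n to exactly one entry of R. *)
Definition Ktransversal (n : nat) (K : 'M[int]_n) (R : seq 'cV[int]_n) : Prop :=
  forall v : 'cV[int]_n, exists! i : 'I_(size R), inKlat K (v - nth 0 R i).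

Definition bilKinv (n : nat) (K : 'M[int]_n) (u v : 'cV[int]_n) : rat :=
  ((map_mx intr u)^T *m invmx (map_mx intr K) *m map_mx intr v) 0 0.

(* x^T (L \otimes K^{-1}) x for x = (x_1,...,x_m), x_j in Z^n *)
Definition quadLK (m n : nat) (L : 'M[int]_m) (K : 'M[int]_n)
  (x : 'I_m -> 'cV[int]_n) : rat :=
  \sum_(j < m) \sum_(k < m) (L j k)%:~R * bilKinv K (x j) (x k).

Definition even_form (n : nat) (K : 'M[int]_n) : Prop :=
  [/\ K^T = K, \det K != 0 & forall i, (2 %| K i i)%Z].

(* Since U is unimodular, right multiplication by U^T permutes the tuples of
   classes in G_K^m, so the sum can be taken over representatives of the
   transformed tuples.  Modulo 2, x^T (L ⊗ K^-1) x only depends on the classes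
   of the x_j: translating the matrix X of the x_j by K W changes it by the
   trace of L (W^T X + X^T W + W^T K W), an even integer because L is symmetric
   and K is even.  After the change of variables L becomes diag(L_reg, 0), so
   the last ν coordinates are free and each contributes a factor |G_K|. *)

From HB Require Import structures.
From mathcomp Require Import all_boot all_order all_algebra.
From mathcomp Require Import reals trigo.
From mathcomp Require Import complex.
From mathcomp Require Import ring.
Set Implicit Arguments.
Unset Strict Implicit.
Unset Printing Implicit Defensive.

Import Order.TTheory GRing.Theory Num.Theory.
Local Open Scope ring_scope.

Lemma periodicz (U V : zmodType) (f : U -> V) (T : U) :
  periodic f T -> forall (z : int) a, f (a + T *~ z) = f a.
Proof.
move=> fT [] k a; first exact: periodicn.
by rewrite NegzE mulrNz -[in RHS](subrK (T *+ k.+1) a) periodicn.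
Qed.

Lemma expiD2piz (R : realType) (t : R) (z : int) : expi (t + pi *+ 2 *~ z) = expi t.
Proof. by rewrite /expi (periodicz (@cosD2pi R)) (periodicz (@sinD2pi R)). Qed.

Lemma dvdz2_sum_sym m (a : 'I_m -> 'I_m -> int) :
  (forall i j, a i j = a j i) -> (forall i, (2 %| a i i)%Z) ->
  (2 %| \sum_i \sum_j a i j)%Z.
Proof.
move=> asym adiag.
pose c (i j : 'I_m) :=
  if (i < j)%N then a i j else if i == j then (a i i %/ 2)%Z else 0.
have acc i j : a i j = c i j + c j i.
  rewrite /c; case: ltngtP => [ij|ji|/val_inj->].
  - by rewrite ifN ?addr0 //; apply: contraTneq ij => ->; rewrite ltnn.
  - by rewrite asym ifN ?add0r //; apply: contraTneq ji => ->; rewrite ltnn.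
  - by rewrite eqxx -{1}(divzK (adiag j)); ring.
have -> : \sum_i \sum_j a i j = (\sum_i \sum_j c i j) * 2.
  rewrite mulr_natr mulr2n [X in _ + X]exchange_big -big_split /=.
  by apply: eq_bigr => i _; rewrite -big_split; apply: eq_bigr => j _; apply: acc.
exact/dvdz_mull/dvdzz.
Qed.

Lemma dvdz2_trace_sym m (A B : 'M[int]_m) :
  A^T = A -> B^T = B -> (forall i, (2 %| B i i)%Z) -> (2 %| \tr (A *m B))%Z.
Proof.
move=> AT BT Bdiag; have Esym (M : 'M[int]_m) i j : M^T = M -> M i j = M j i.
  by move=> MT; rewrite -[in LHS]MT mxE.
rewrite /mxtrace; under eq_bigr => i _ do rewrite mxE.
apply: dvdz2_sum_sym => [i j|i]; first by rewrite (Esym A) // (Esym B).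
exact: dvdz_mull.
Qed.

Lemma sum_ffun_lshift (V : nmodType) (I : finType) (rho nu : nat)
    (g : {ffun 'I_rho -> I} -> V) :
  \sum_(b : {ffun 'I_(rho + nu) -> I}) g [ffun j => b (lshift nu j)]
  = (\sum_y g y) *+ (#|I| ^ nu).
Proof.
pose glue (p : {ffun 'I_rho -> I} * {ffun 'I_nu -> I}) :
    {ffun 'I_(rho + nu) -> I} :=
  [ffun i => match split i with inl j => p.1 j | inr k => p.2 k end].
pose cut (b : {ffun 'I_(rho + nu) -> I}) :=
  ([ffun j => b (lshift nu j)], [ffun k => b (rshift rho k)]).
have cutK : cancel cut glue.
  move=> b; apply/ffunP => i; rewrite ffunE.
  by move: (splitK i); case: (split i) => [j|k] <-; rewrite ffunE.
have glueK : cancel glue cut.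
  case=> y z; congr (_, _); apply/ffunP => j; rewrite !ffunE.
    by rewrite (unsplitK (inl _ j)).
  by rewrite (unsplitK (inr _ j)).
rewrite (reindex glue); last exact: onW_bij (Bijective glueK cutK).
transitivity (\sum_(p : {ffun 'I_rho -> I} * {ffun 'I_nu -> I}) g p.1).
  apply: eq_bigr => -[y z] _; congr g.
  by apply/ffunP => j; rewrite !ffunE (unsplitK (inl _ j)).
rewrite -(pair_big predT predT (fun y _ => g y)) -sumrMnl /=.
by apply: eq_bigr => y _; rewrite sumr_const card_ffun card_ord.
Qed.

Local Notation ratmx := (map_mx (intr : int -> rat)).

Definition colsmx (R : Type) m n (x : 'I_m -> 'cV[R]_n) : 'M[R]_(n, m) :=
  \matrix_(i, j) x j i 0.

Lemma col_colsmx (R : Type) m n (x : 'I_m -> 'cV[R]_n) j : col j (colsmx x) = x j.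
Proof. by apply/colP => i; rewrite !mxE. Qed.

Definition quadmx m n (L : 'M[int]_m) (K : 'M[int]_n) (X : 'M[int]_(n, m)) : rat :=
  \tr ((ratmx L)^T *m ((ratmx X)^T *m invmx (ratmx K) *m ratmx X)).

Lemma quadLK_quadmx m n (L : 'M[int]_m) (K : 'M[int]_n) (x : 'I_m -> 'cV[int]_n) :
  quadLK L K x = quadmx L K (colsmx x).
Proof.
rewrite /quadLK /quadmx /mxtrace exchange_big; apply: eq_bigr => k _.
rewrite mxE; apply: eq_bigr => j _; rewrite !mxE; congr (_ * _).
rewrite /bilKinv !mxE; apply: eq_bigr => b _; rewrite !mxE; congr (_ * _).
by apply: eq_bigr => a _; rewrite !mxE.
Qed.

Definition inKlatmx n m (K : 'M[int]_n) (X : 'M[int]_(n, m)) : Prop :=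
  exists W : 'M[int]_(n, m), X = K *m W.

Lemma inKlatmxP n m (K : 'M[int]_n) (X : 'M[int]_(n, m)) :
  inKlatmx K X <-> forall j, inKlat K (col j X).
Proof.
have col_mulmx (W : 'M[int]_(n, m)) j : col j (K *m W) = K *m col j W.
  by apply/colP => i; rewrite !mxE; apply: eq_bigr => a _; rewrite !mxE.
split=> [[W ->] j|]; first by exists (col j W); rewrite col_mulmx.
case/fin_all_exists => w Xw; exists (colsmx w).
apply/matrixP => i j; move/colP/(_ i): (Xw j); rewrite !mxE => ->.
by apply: eq_bigr => a _; rewrite !mxE.
Qed.

Lemma quadmx_addK m n (L : 'M[int]_m) (K : 'M[int]_n) (X W : 'M[int]_(n, m)) :
  K^T = K -> \det K != 0 ->
  quadmx L K (X + K *m W)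
  = quadmx L K X + (\tr (L^T *m (W^T *m X + X^T *m W + W^T *m K *m W)))%:~R.
Proof.
move=> KT K0; rewrite /quadmx.
set Kq := ratmx K; set Xq := ratmx X; set Wq := ratmx W.
have KqT : Kq^T = Kq by rewrite /Kq map_trmx KT.
have Kq_unit : Kq \in unitmx by rewrite unitmxE det_map_mx unitfE intr_eq0.
rewrite -trace_map_mx -mxtraceD !(map_mxM, map_mxD) -!map_trmx -/Kq -/Xq -/Wq.
rewrite -mulmxDr.
congr (\tr (_ *m _)).
rewrite [(_ + _)^T]linearD /= trmx_mul KqT !(mulmxDl, mulmxDr) !mulmxA.
by rewrite (mulmxKV Kq_unit) !(mulmxK Kq_unit) !addrA.
Qed.

Lemma dvdz2_quad_diag n m (K : 'M[int]_n) (W : 'M[int]_(n, m)) :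
  even_form K -> forall j, (2 %| (W^T *m K *m W) j j)%Z.
Proof.
case=> KT _ Kdiag j.
have -> : (W^T *m K *m W) j j = \sum_a \sum_b W a j * K a b * W b j.
  rewrite mxE exchange_big; apply: eq_bigr => b _.
  by rewrite mxE big_distrl; apply: eq_bigr => a _; rewrite !mxE.
apply: dvdz2_sum_sym => [a b|a]; last by rewrite mulrAC dvdz_mull.
by rewrite -[in K a b]KT mxE; ring.
Qed.

Lemma dvdz2_quadmx_shift m n (L : 'M[int]_m) (K : 'M[int]_n)
    (X W : 'M[int]_(n, m)) :
  L^T = L -> even_form K ->
  (2 %| \tr (L^T *m (W^T *m X + X^T *m W + W^T *m K *m W)))%Z.
Proof.
move=> LT Kf; have [KT _ _] := Kf.
have cross : \tr (L *m (X^T *m W)) = \tr (L *m (W^T *m X)).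
  by rewrite -mxtrace_tr !trmx_mul trmxK LT mxtrace_mulC.
rewrite LT !mulmxDr !mxtraceD cross; apply: rpredD.
  by apply/dvdzP; exists (\tr (L *m (W^T *m X))); ring.
apply: dvdz2_trace_sym => //; last exact: dvdz2_quad_diag.
by rewrite !trmx_mul trmxK KT mulmxA.
Qed.

Lemma expi_quadmx_lattice (R : realType) m n (L : 'M[int]_m) (K : 'M[int]_n)
    (X Y : 'M[int]_(n, m)) :
  L^T = L -> even_form K -> inKlatmx K (Y - X) ->
  expi (pi * ratr (quadmx L K Y)) = expi (pi * ratr (quadmx L K X)) :> R[i].
Proof.
move=> LT Kf [W YXW]; have [KT K0 _] := Kf.
have -> : Y = X + K *m W by rewrite -YXW addrC subrK.
rewrite quadmx_addK //; have /dvdzP[z ->] := dvdz2_quadmx_shift X W LT Kf.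
by rewrite rmorphD /= mulrDr ratr_int (mulrC z) mulrzr mulrzA; apply: expiD2piz.
Qed.

Lemma quadmx_mulmx_tr m n (L : 'M[int]_m) (K : 'M[int]_n) (X : 'M[int]_(n, m))
    (U : 'M[int]_m) :
  quadmx L K (X *m U^T) = quadmx (U^T *m L *m U) K X.
Proof.
rewrite /quadmx !map_mxM -!map_trmx !trmx_mul !trmxK !mulmxA.
by rewrite [LHS]mxtrace_mulC !mulmxA.
Qed.

Lemma quadLK_block rho nu n (Lreg : 'M[int]_rho) (K : 'M[int]_n)
    (z : 'I_(rho + nu) -> 'cV[int]_n) :
  quadLK (block_mx Lreg 0 0 0) K z = quadLK Lreg K (fun j => z (lshift nu j)).
Proof.
rewrite /quadLK big_split_ord /= [X in _ + X]big1 ?addr0 => [|j _].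
  apply: eq_bigr => j _.
  rewrite big_split_ord /= [X in _ + X]big1 ?addr0 => [|k _].
    by apply: eq_bigr => k _; rewrite block_mxEul.
  by rewrite block_mxEur mxE mul0r.
rewrite big_split_ord /= !big1 ?addr0 // => k _;
  by rewrite (block_mxEdl, block_mxEdr) mxE mul0r.
Qed.

Lemma inKlatmxB n m (K : 'M[int]_n) (X Y : 'M[int]_(n, m)) :
  inKlatmx K X -> inKlatmx K Y -> inKlatmx K (X - Y).
Proof. by move=> [A ->] [B ->]; exists (A - B); rewrite mulmxBr. Qed.

Lemma inKlatmx_mulmxr_unit n m (K : 'M[int]_n) (X : 'M[int]_(n, m))
    (V : 'M[int]_m) :
  V \in unitmx -> inKlatmx K (X *m V) -> inKlatmx K X.
Proof. by move=> Vu [W XVW]; exists (W *m invmx V); rewrite mulmxA -XVW mulmxK. Qed.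

Lemma Ktransversal_inj n (K : 'M[int]_n) (T : seq 'cV[int]_n)
    (i j : 'I_(size T)) :
  Ktransversal K T -> inKlat K (nth 0 T i - nth 0 T j) -> i = j.
Proof.
move=> Ktr Kij; have [k [_ k_uniq]] := Ktr (nth 0 T i).
by rewrite -(k_uniq j Kij) (k_uniq i) // subrr; exists 0; rewrite mulmx0.
Qed.

Local Notation pickmx T a := (colsmx (fun j => nth 0 T (a j))).

Lemma Ktransversal_reindex n m (K : 'M[int]_n) (T : seq 'cV[int]_n)
    (V : 'M[int]_m) :
  Ktransversal K T -> V \in unitmx ->
  exists2 psi : {ffun 'I_m -> 'I_(size T)} -> {ffun 'I_m -> 'I_(size T)},
    injective psi &
    forall a : {ffun 'I_m -> 'I_(size T)},
      inKlatmx K (pickmx T a *m V - pickmx T (psi a)).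
Proof.
move=> Ktr Vu.
have col_pickB (Y : 'M[int]_(n, m)) (b : {ffun 'I_m -> 'I_(size T)}) j :
  col j (Y - pickmx T b) = col j Y - nth 0 T (b j).
  by apply/colP => i; rewrite !mxE.
have rep (a : {ffun 'I_m -> 'I_(size T)}) j :
    exists i : 'I_(size T), inKlat K (col j (pickmx T a *m V) - nth 0 T i).
  by have [i [Ki _]] := Ktr (col j (pickmx T a *m V)); exists i.
have [f fP] := fin_all_exists (fun a => fin_all_exists (rep a)).
pose psi a := finfun (f a).
have psiP (a : {ffun 'I_m -> 'I_(size T)}) :
    inKlatmx K (pickmx T a *m V - pickmx T (psi a)).
  by apply/inKlatmxP => j; rewrite col_pickB ffunE.
exists psi => // a1 a2 psi12; apply/ffunP => j; apply: (Ktransversal_inj Ktr).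
have := inKlatmxB (psiP a1) (psiP a2).
rewrite psi12 opprB addrA subrK -mulmxBl.
by move/(inKlatmx_mulmxr_unit Vu)/inKlatmxP/(_ j); rewrite col_pickB col_colsmx.
Qed.

Theorem lemma4p5 (R : realType) (n rho nu : nat)
  (K : 'M[int]_n) (L : 'M[int]_(rho + nu)) (U : 'M[int]_(rho + nu))
  (Lreg : 'M[int]_rho) (T : seq 'cV[int]_n) :
  even_form K ->
  L^T = L ->
  U \in unitmx ->
  U^T *m L *m U = block_mx Lreg 0 0 0 ->
  \det Lreg != 0 ->
  Ktransversal K T ->
  \sum_(a : {ffun 'I_(rho + nu) -> 'I_(size T)})
      expi (2 * pi * ratr (2^-1 * quadLK L K (fun j => nth 0 T (a j))))
  = ((size T)%:R ^+ nu) *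
    \sum_(y : {ffun 'I_rho -> 'I_(size T)})
      expi (pi * ratr (quadLK Lreg K (fun j => nth 0 T (y j)))) :> R[i].
Proof.
move=> Kf LT Uu hU _ Ktr.
have [psi psi_inj psiP] := Ktransversal_reindex Ktr (etrans (unitmx_tr U) Uu).
have half (q : rat) : 2 * pi * ratr (2^-1 * q) = pi * ratr q :> R.
  rewrite rmorphM /= fmorphV (rmorph_nat _ 2) -mulrA mulrCA [2 * _]mulrA.
  by rewrite mulfV ?mul1r // pnatr_eq0.
pose G (y : {ffun 'I_rho -> 'I_(size T)}) : R[i] :=
  expi (pi * ratr (quadLK Lreg K (fun j => nth 0 T (y j)))).
rewrite (reindex_inj psi_inj) /=.
transitivity (\sum_(b : {ffun 'I_(rho + nu) -> 'I_(size T)})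
                G [ffun j => b (lshift nu j)]).
  apply: eq_bigr => a _.
  rewrite half quadLK_quadmx -(expi_quadmx_lattice _ LT Kf (psiP a)).
  rewrite quadmx_mulmx_tr hU -quadLK_quadmx quadLK_block /G /quadLK.
  congr (expi (pi * ratr _)).
  by apply: eq_bigr => j _; apply: eq_bigr => k _; rewrite !ffunE.
by rewrite sum_ffun_lshift card_ord -natrX mulr_natl.
Qed.
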